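(* Let $X$ be a topological space. The idempotents of $N(X)$ are precisely the characteristic functions $\chi_U$ with $U$ a regular open subset of $X$, and $U\mapsto\chi_U$ is a boolean isomorphism from the boolean algebra ${\sf RO}(X)$ of regular open subsets of $X$ onto the boolean algebra of idempotents of $N(X)$.
   Context: $B(X)$ is the set of bounded real-valued functions on $X$. For $f\in B(X)$ and $x\in X$, with $\mathcal N_x$ the set of open neighborhoods of $x$: $f_*(x)=\sup\{\inf f[U]\mid U\in\mathcal N_x\}$, $f^*(x)=\inf\{\sup f[U]\mid U\in\mathcal N_x\}$, and $f^\#=(f^* )_*$. $f$ is normal if $f=f^\#$, and $N(X)=\{f\in B(X)\mid f=f^\#\}$. $N(X)$ is a Dedekind complete bounded archimedean $\ell$-algebra whose operations (addition, multiplication, scalar multiplication, binary joins and meets) are the normalizations $(\cdot)^\#$ of the corresponding pointwise operations; in particular positive scalar multiplication and meets are pointwise. The idempotents of a commutative ring form a boolean algebra with $e\wedge f=ef$, $e\vee f=e+f-ef$, $\lnot e=1-e$. A set $U$ is regular open if $U={\sf int}\,{\sf cl}(U)$. *)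

From HB Require Import structures.
From mathcomp Require Import all_boot all_order all_algebra.
From mathcomp Require Import all_classical all_reals all_analysis.
Set Implicit Arguments. Unset Strict Implicit. Unset Printing Implicit Defensive.
Import Order.TTheory GRing.Theory Num.Theory.
Local Open Scope classical_set_scope.
Local Open Scope ring_scope.

Section NormalFunctions.
Context {R : realType} {X : topologicalType}.

Definition bounded_fun (f : X -> R) : Prop := exists M : R, forall x, `|f x| <= M.

Definition open_nbhd (x : X) : set (set X) := [set U | open U /\ U x].

Definition lower_fun (f : X -> R) : X -> R :=
  fun x => sup [set inf (f @` U) | U in open_nbhd x].

Definition upper_fun (f : X -> R) : X -> R :=
  fun x => inf [set sup (f @` U) | U in open_nbhd x].

Definition sharp (f : X -> R) : X -> R := lower_fun (upper_fun f).

Definition normal_fun (f : X -> R) : Prop := bounded_fun f /\ sharp f = f.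

Definition addN (f g : X -> R) : X -> R := sharp (fun x => f x + g x).
Definition subN (f g : X -> R) : X -> R := sharp (fun x => f x - g x).
Definition mulN (f g : X -> R) : X -> R := sharp (fun x => f x * g x).
Definition oneN : X -> R := sharp (fun _ => 1).
Definition zeroN : X -> R := sharp (fun _ => 0).

Definition idempotentN (e : X -> R) : Prop := normal_fun e /\ mulN e e = e.

Definition idem_meet (e f : X -> R) : X -> R := mulN e f.
Definition idem_join (e f : X -> R) : X -> R := subN (addN e f) (mulN e f).
Definition idem_compl (e : X -> R) : X -> R := subN oneN e.

Definition chi (U : set X) : X -> R := \1_U.

End NormalFunctions.

Definition regular_open {X : topologicalType} (U : set X) : Prop :=
  U = interior (closure U).
Definition ro_meet {X : topologicalType} (U V : set X) : set X := U `&` V.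
Definition ro_join {X : topologicalType} (U V : set X) : set X :=
  interior (closure (U `|` V)).
Definition ro_compl {X : topologicalType} (U : set X) : set X := interior (~` U).

From mathcomp Require Import all_boot all_order all_algebra.
From mathcomp Require Import all_classical all_reals all_analysis.
From mathcomp Require Import lra.
Import Order.TTheory GRing.Theory Num.Theory.
Local Open Scope classical_set_scope.
Local Open Scope ring_scope.

(* The proof rests on two computations of the envelopes f^* and f_*.
   (1) For a nested step function chi_A + chi_B (B inside A) the upper envelope
       is chi_(cl A) + chi_(cl B) and the lower one chi_(int A) + chi_(int B);
       hence (chi_A + chi_B)^# = chi_(int cl A) + chi_(int cl B), and in
       particular chi_A^# = chi_(int cl A).  This yields that chi_U is normal
       and idempotent for U regular open, and computes the boolean operations,
       since chi_U + chi_V = chi_(U \/ V) + chi_(U /\ V) is such a step function.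
   (2) On functions with values in [0, M], both envelopes commute with squaring,
       because squaring is increasing there and so commutes with sup and inf.
       Thus an idempotent e = (e^2)^# is nonnegative and satisfies e = e^2
       pointwise, so e is the characteristic function of its level set 1,
       which is regular open by (1). *)

Section SquaresOfBounds.
Context {R : realType}.
Implicit Types (S : set R) (M : R).

(* Squaring is increasing on [0, M], so it commutes with sup and inf of a
   nonempty subset of [0, M]; this is what makes normalization commute with
   squaring on nonnegative functions. *)
Lemma sup_sqr S M : S !=set0 -> (forall s, S s -> 0 <= s <= M) ->
  sup [set s ^+ 2 | s in S] = (sup S) ^+ 2.
Proof.
move=> [s0 Ss0] hS.
have ubS : has_ubound S by exists M => s /hS /andP[].
have ubS2 : has_ubound [set s ^+ 2 | s in S].
  by exists (M ^+ 2) => _ [s /hS /andP[s_ge0 s_leM] <-]; nra.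
have supS_ge0 : 0 <= sup S.
  by have := ub_le_sup ubS Ss0; have /andP[] := hS _ Ss0; lra.
have supS2_ge0 : 0 <= sup [set s ^+ 2 | s in S].
  by apply: le_trans (ub_le_sup ubS2 (ex_intro2 _ _ s0 Ss0 erefl)); exact: sqr_ge0.
apply/le_anti/andP; split.
  apply: ge_sup => [|_ [s Ss <-]]; first by exists (s0 ^+ 2), s0.
  by have := ub_le_sup ubS Ss; have /andP[] := hS _ Ss; nra.
have le_sqrt : sup S <= Num.sqrt (sup [set s ^+ 2 | s in S]).
  apply: ge_sup => [|s Ss]; first by exists s0.
  have /andP[s_ge0 _] := hS _ Ss.
  rewrite -(ger0_norm s_ge0) -sqrtr_sqr ler_sqrt //.
  exact: (ub_le_sup ubS2 (ex_intro2 _ _ s Ss erefl)).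
rewrite -[leRHS](sqr_sqrtr supS2_ge0).
by have := sqrtr_ge0 (sup [set s ^+ 2 | s in S]); nra.
Qed.

Lemma inf_sqr S M : S !=set0 -> (forall s, S s -> 0 <= s <= M) ->
  inf [set s ^+ 2 | s in S] = (inf S) ^+ 2.
Proof.
move=> [s0 Ss0] hS.
have lbS : has_lbound S by exists 0 => s /hS /andP[].
have lbS2 : has_lbound [set s ^+ 2 | s in S] by exists 0 => _ [s _ <-]; exact: sqr_ge0.
have infS_ge0 : 0 <= inf S by apply: lb_le_inf => [|s /hS /andP[]]; first by exists s0.
have infS2_ge0 : 0 <= inf [set s ^+ 2 | s in S].
  apply: lb_le_inf => [|_ [s _ <-]]; last exact: sqr_ge0.
  by exists (s0 ^+ 2), s0.
apply/le_anti/andP; split; last first.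
  apply: lb_le_inf => [|_ [s Ss <-]]; first by exists (s0 ^+ 2), s0.
  by have := ge_inf lbS Ss; have /andP[] := hS _ Ss; nra.
have ge_sqrt : Num.sqrt (inf [set s ^+ 2 | s in S]) <= inf S.
  apply: lb_le_inf => [|s Ss]; first by exists s0.
  have /andP[s_ge0 _] := hS _ Ss.
  rewrite -(ger0_norm s_ge0) -sqrtr_sqr ler_sqrt ?sqr_ge0 //.
  exact: (ge_inf lbS2 (ex_intro2 _ _ s Ss erefl)).
rewrite -[leLHS](sqr_sqrtr infS2_ge0).
by have := sqrtr_ge0 (inf [set s ^+ 2 | s in S]); nra.
Qed.

End SquaresOfBounds.

Section Envelopes.
Context {R : realType} {X : topologicalType} {h : X -> R} {m M : R}.
Hypothesis h_bounds : forall y, m <= h y <= M.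

Lemma open_nbhd_setT (x : X) : open_nbhd x setT.
Proof. by split => //; exact: openT. Qed.

Lemma has_ubound_image (U : set X) : has_ubound (h @` U).
Proof. by exists M => _ [y _ <-]; case/andP: (h_bounds y). Qed.

Lemma has_lbound_image (U : set X) : has_lbound (h @` U).
Proof. by exists m => _ [y _ <-]; case/andP: (h_bounds y). Qed.

Lemma sup_image_bounds {U : set X} {x : X} : U x -> m <= sup (h @` U) <= M.
Proof.
move=> Ux; apply/andP; split.
  apply: le_trans (ub_le_sup (has_ubound_image U) (ex_intro2 _ _ x Ux erefl)).
  by case/andP: (h_bounds x).
by apply: ge_sup => [|_ [y _ <-]]; [exists (h x), x | case/andP: (h_bounds y)].
Qed.

Lemma inf_image_bounds {U : set X} {x : X} : U x -> m <= inf (h @` U) <= M.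
Proof.
move=> Ux; apply/andP; split; last first.
  apply: le_trans (ge_inf (has_lbound_image U) (ex_intro2 _ _ x Ux erefl)) _.
  by case/andP: (h_bounds x).
by apply: lb_le_inf => [|_ [y _ <-]]; [exists (h x), x | case/andP: (h_bounds y)].
Qed.

Lemma upper_fun_bounds (x : X) : m <= upper_fun h x <= M.
Proof.
have lb : has_lbound [set sup (h @` U) | U in open_nbhd x].
  by exists m => _ [U [_ Ux] <-]; case/andP: (sup_image_bounds Ux).
apply/andP; split.
  apply: lb_le_inf => [|_ [U [_ Ux] <-]]; last by case/andP: (sup_image_bounds Ux).
  by exists (sup (h @` setT)), setT; first exact: open_nbhd_setT.
apply: le_trans (ge_inf lb (ex_intro2 _ _ setT (open_nbhd_setT x) erefl)) _.
by case/andP: (sup_image_bounds (I : setT x)).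
Qed.

Lemma lower_fun_bounds (x : X) : m <= lower_fun h x <= M.
Proof.
have ub : has_ubound [set inf (h @` U) | U in open_nbhd x].
  by exists M => _ [U [_ Ux] <-]; case/andP: (inf_image_bounds Ux).
apply/andP; split; last first.
  apply: ge_sup => [|_ [U [_ Ux] <-]]; last by case/andP: (inf_image_bounds Ux).
  by exists (inf (h @` setT)), setT; first exact: open_nbhd_setT.
apply: le_trans (ub_le_sup ub (ex_intro2 _ _ setT (open_nbhd_setT x) erefl)).
by case/andP: (inf_image_bounds (I : setT x)).
Qed.

Lemma upper_funE (x : X) (c : R) :
  (forall U, open U -> U x -> exists2 y, U y & c <= h y) ->
  (exists U, [/\ open U, U x & forall y, U y -> h y <= c]) ->
  upper_fun h x = c.
Proof.
move=> reach [U0 [oU0 U0x below]].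
have c_lb : lbound [set sup (h @` U) | U in open_nbhd x] c.
  move=> _ [U [oU Ux] <-]; have [y Uy c_le] := reach U oU Ux.
  exact: le_trans c_le (ub_le_sup (has_ubound_image U) (ex_intro2 _ _ y Uy erefl)).
apply/le_anti/andP; split; last first.
  by apply: lb_le_inf => //; exists (sup (h @` setT)), setT; first exact: open_nbhd_setT.
have lb : has_lbound [set sup (h @` U) | U in open_nbhd x] by exists c.
apply: le_trans (ge_inf lb (ex_intro2 _ _ U0 (conj oU0 U0x) erefl)) _.
by apply: ge_sup => [|_ [y Uy <-]]; [exists (h x), x | exact: below].
Qed.

Lemma lower_funE (x : X) (c : R) :
  (forall U, open U -> U x -> exists2 y, U y & h y <= c) ->
  (exists U, [/\ open U, U x & forall y, U y -> c <= h y]) ->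
  lower_fun h x = c.
Proof.
move=> reach [U0 [oU0 U0x above]].
have c_ub : ubound [set inf (h @` U) | U in open_nbhd x] c.
  move=> _ [U [oU Ux] <-]; have [y Uy le_c] := reach U oU Ux.
  exact: le_trans (ge_inf (has_lbound_image U) (ex_intro2 _ _ y Uy erefl)) le_c.
apply/le_anti/andP; split.
  by apply: ge_sup => //; exists (inf (h @` setT)), setT; first exact: open_nbhd_setT.
have ub : has_ubound [set inf (h @` U) | U in open_nbhd x] by exists c.
apply: le_trans (ub_le_sup ub (ex_intro2 _ _ U0 (conj oU0 U0x) erefl)).
by apply: lb_le_inf => [|_ [y Uy <-]]; [exists (h x), x | exact: above].
Qed.

End Envelopes.

Lemma sharp_bounds {R : realType} {X : topologicalType} {h : X -> R} {m M : R} :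
  (forall y, m <= h y <= M) -> forall x, m <= sharp h x <= M.
Proof. by move=> h_bounds x; apply: lower_fun_bounds; exact: upper_fun_bounds. Qed.

Section Squares.
Context {R : realType} {X : topologicalType} {h : X -> R} {M : R}.
Hypothesis h_bounds : forall y, 0 <= h y <= M.

Let sqr_h := fun y => h y ^+ 2.

Lemma upper_fun_sqr (x : X) : upper_fun sqr_h x = (upper_fun h x) ^+ 2.
Proof.
have local_sup U : U x -> sup (sqr_h @` U) = (sup (h @` U)) ^+ 2.
  move=> Ux; rewrite -(image_comp h (fun s => s ^+ 2)).
  by apply: (@sup_sqr _ _ M) => [|_ [y _ <-]]; [exists (h x), x | exact: h_bounds].
rewrite /upper_fun (_ : [set sup (sqr_h @` U) | U in open_nbhd x] =
    [set s ^+ 2 | s in [set sup (h @` U) | U in open_nbhd x]]).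
  apply: (@inf_sqr _ _ M) => [|_ [U [_ Ux] <-]]; last exact: sup_image_bounds Ux.
  by exists (sup (h @` setT)), setT; first exact: open_nbhd_setT.
apply/seteqP; split => t.
  by move=> [U [oU Ux] <-]; exists (sup (h @` U)); [exists U | rewrite local_sup].
by move=> [_ [U [oU Ux] <-] <-]; exists U => //; rewrite local_sup.
Qed.

Lemma lower_fun_sqr (x : X) : lower_fun sqr_h x = (lower_fun h x) ^+ 2.
Proof.
have local_inf U : U x -> inf (sqr_h @` U) = (inf (h @` U)) ^+ 2.
  move=> Ux; rewrite -(image_comp h (fun s => s ^+ 2)).
  by apply: (@inf_sqr _ _ M) => [|_ [y _ <-]]; [exists (h x), x | exact: h_bounds].
rewrite /lower_fun (_ : [set inf (sqr_h @` U) | U in open_nbhd x] =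
    [set s ^+ 2 | s in [set inf (h @` U) | U in open_nbhd x]]).
  apply: (@sup_sqr _ _ M) => [|_ [U [_ Ux] <-]]; last exact: inf_image_bounds Ux.
  by exists (inf (h @` setT)), setT; first exact: open_nbhd_setT.
apply/seteqP; split => t.
  by move=> [U [oU Ux] <-]; exists (inf (h @` U)); [exists U | rewrite local_inf].
by move=> [_ [U [oU Ux] <-] <-]; exists U => //; rewrite local_inf.
Qed.

End Squares.

Lemma sharp_sqr {R : realType} {X : topologicalType} {h : X -> R} {M : R} :
  (forall y, 0 <= h y <= M) ->
  sharp (fun y => h y ^+ 2) = (fun y => sharp h y ^+ 2).
Proof.
move=> h_bounds; apply: funext => x; rewrite /sharp.
rewrite (_ : upper_fun _ = fun y => upper_fun h y ^+ 2); last first.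
  by apply: funext => y; exact: upper_fun_sqr h_bounds y.
by apply: lower_fun_sqr => y; exact: upper_fun_bounds.
Qed.

Section Characteristic.
Context {R : realType} {X : topologicalType}.
Implicit Types (A B : set X) (x : X).

Lemma chi_in {A x} : A x -> chi A x = 1 :> R.
Proof. by move=> Ax; rewrite /chi indicE mem_set. Qed.

Lemma chi_out {A x} : ~ A x -> chi A x = 0 :> R.
Proof. by move=> nAx; rewrite /chi indicE memNset. Qed.

Lemma chi_bounds A x : (0 : R) <= chi A x <= (1 : R).
Proof. by have [/chi_in|/chi_out] := pselect (A x) => ->; rewrite ?lexx ler01. Qed.

Lemma chi_level1 A : [set x | chi A x = 1 :> R] = A.
Proof.
apply/seteqP; split => x /=; last by move/chi_in.
by have [//|/chi_out ->] := pselect (A x); move/eqP; rewrite eq_sym oner_eq0.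
Qed.

Lemma chi_inj A B : chi A = chi B :> (X -> R) -> A = B.
Proof. by move=> eqAB; rewrite -(chi_level1 A) -(chi_level1 B) eqAB. Qed.

Lemma chi_addE A B :
  (fun x => chi A x + chi B x) = (fun x => chi (A `|` B) x + chi (A `&` B) x) :> (X -> R).
Proof.
apply: funext => x; rewrite /chi !indicE in_setU in_setI.
by case: (x \in A); case: (x \in B); rewrite //= addrC.
Qed.

Lemma chi_setC A : (fun x => 1 - chi A x) = chi (~` A) :> (X -> R).
Proof.
apply: funext => x; rewrite /chi !indicE in_setC.
by case: (x \in A); rewrite /= ?subrr ?subr0.
Qed.

End Characteristic.

Section OpenNeighborhoods.
Context {X : topologicalType}.
Implicit Types (A U : set X) (x : X).

Lemma closure_meets_open {A x U} : closure A x -> open U -> U x -> exists y, U y /\ A y.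
Proof.
move=> clAx oU Ux; have : nbhs x U by rewrite nbhsE; exists U.
by move=> /clAx [y [Ay Uy]]; exists y.
Qed.

Lemma not_closure_nbhd {A x} :
  ~ closure A x -> exists U, [/\ open U, U x & forall y, U y -> ~ A y].
Proof.
apply: contra_notP => noU B; rewrite nbhsE => -[U [oU Ux] UB].
apply: contrapT => nAB; apply: noU; exists U; split => // y Uy Ay.
by apply: nAB; exists y; split => //; exact: UB.
Qed.

Lemma interior_nbhd {A x} : interior A x -> exists U, [/\ open U, U x & U `<=` A].
Proof. by rewrite /interior nbhsE => -[U [oU Ux] UA]; exists U. Qed.

Lemma not_interior_meets {A x U} :
  ~ interior A x -> open U -> U x -> exists y, U y /\ ~ A y.
Proof.
move=> nintAx oU Ux; apply: contrapT => noy; apply: nintAx.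
rewrite /interior nbhsE; exists U => // y Uy; apply: contrapT => nAy.
by apply: noy; exists y.
Qed.

End OpenNeighborhoods.

Section StepEnvelopes.
Context {R : realType} {X : topologicalType}.
Variables (A B : set X).
Hypothesis BA : B `<=` A.

Let step : X -> R := fun y => chi A y + chi B y.

Let step_bounds y : 0 <= step y <= 2.
Proof. by have := chi_bounds (R := R) A y; have := chi_bounds (R := R) B y; rewrite /step; lra. Qed.

Lemma upper_fun_step (x : X) :
  upper_fun step x = chi (closure A) x + chi (closure B) x.
Proof.
apply: (upper_funE step_bounds).
- move=> U oU Ux.
  have [clBx|nclBx] := pselect (closure B x).
    have [y [Uy By]] := closure_meets_open clBx oU Ux.
    exists y => //; rewrite /step !chi_in //; [exact: BA | exact: closureS clBx].
  have [clAx|nclAx] := pselect (closure A x).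
    have [y [Uy Ay]] := closure_meets_open clAx oU Ux.
    exists y => //; rewrite /step (chi_out nclBx) (chi_in clAx) (chi_in Ay).
    by have := chi_bounds (R := R) B y; lra.
  by exists x => //; rewrite !chi_out // addr0; case/andP: (step_bounds x).
- have [clBx|nclBx] := pselect (closure B x).
    exists setT; split => // [|y _]; first exact: openT.
    by rewrite !chi_in //; [case/andP: (step_bounds y) | exact: closureS clBx].
  have [U [oU Ux notB]] := not_closure_nbhd nclBx.
  have [clAx|nclAx] := pselect (closure A x).
    exists U; split => // y Uy; rewrite /step (chi_out (notB _ Uy)) (chi_out nclBx) (chi_in clAx).
    by have := chi_bounds (R := R) A y; lra.
  have [V [oV Vx notA]] := not_closure_nbhd nclAx.
  exists V; split => // y Vy; have nAy := notA _ Vy.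
  by rewrite /step !chi_out // => /BA.
Qed.

Lemma lower_fun_step (x : X) :
  lower_fun step x = chi (interior A) x + chi (interior B) x.
Proof.
apply: (lower_funE step_bounds).
- move=> U oU Ux.
  have [intAx|nintAx] := pselect (interior A x); last first.
    have [y [Uy nAy]] := not_interior_meets nintAx oU Ux.
    have nintBx : ~ interior B x by move/(interiorS BA).
    have nBy : ~ B y by move/BA.
    by exists y => //; rewrite /step !chi_out.
  have [intBx|nintBx] := pselect (interior B x).
    by exists x => //; rewrite !chi_in //; case/andP: (step_bounds x).
  have [y [Uy nBy]] := not_interior_meets nintBx oU Ux.
  exists y => //; rewrite /step (chi_out nBy) (chi_out nintBx) (chi_in intAx).
  by have := chi_bounds (R := R) A y; lra.
- have [intBx|nintBx] := pselect (interior B x).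
    have [U [oU Ux UB]] := interior_nbhd intBx.
    exists U; split => // y Uy; have By := UB _ Uy.
    by rewrite /step !chi_in //; [exact: BA | exact: interiorS intBx].
  have [intAx|nintAx] := pselect (interior A x).
    have [U [oU Ux UA]] := interior_nbhd intAx.
    exists U; split => // y Uy; rewrite /step (chi_out nintBx) (chi_in (UA _ Uy)) (chi_in intAx).
    by have := chi_bounds (R := R) B y; lra.
  exists setT; split => // [|y _]; first exact: openT.
  by rewrite !chi_out //; have := step_bounds y; lra.
Qed.

End StepEnvelopes.

Section NormalizedCharacteristic.
Context {R : realType} {X : topologicalType}.
Implicit Types (A B U V : set X).

Lemma sharp_chi_add_nested A B : B `<=` A ->
  sharp (fun y => chi A y + chi B y) =
  (fun y => chi (interior (closure A)) y + chi (interior (closure B)) y) :> (X -> R).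
Proof.
move=> BA; apply: funext => x; rewrite /sharp.
rewrite (_ : upper_fun _ = fun y => chi (closure A) y + chi (closure B) y).
  by apply: lower_fun_step; exact: closureS.
by apply: funext => y; exact: upper_fun_step.
Qed.

Lemma sharp_chi A : sharp (chi A) = chi (interior (closure A)) :> (X -> R).
Proof.
have add_chi0 B : (fun y => chi B y + chi set0 y) = chi B :> (X -> R).
  by apply: funext => y; rewrite (@chi_out _ _ set0 y id) addr0.
by have := @sharp_chi_add_nested A set0 (sub0set A); rewrite closure0 interior0 !add_chi0.
Qed.

Lemma mulN_chi U V : mulN (chi U) (chi V) = chi (interior (closure (U `&` V))) :> (X -> R).
Proof. by rewrite /mulN -sharp_chi /chi indicI. Qed.

Lemma idempotentN_chi U : regular_open U -> idempotentN (chi U : X -> R).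
Proof.
move=> roU; split; last by rewrite mulN_chi setIid -roU.
split; last by rewrite sharp_chi -roU.
by exists 1 => x; have /andP[ge0 le1] := chi_bounds (R := R) U x; rewrite ger0_norm.
Qed.

End NormalizedCharacteristic.

Section Idempotents.
Context {R : realType} {X : topologicalType}.

(* A bounded normal function e with (e^2)^# = e takes only the values 0 and 1:
   e = (e^2)^# >= 0, and then e = (e^2)^# = (e^#)^2 = e^2 pointwise. *)
Lemma idempotentN_01 {e : X -> R} : idempotentN e -> forall x, e x = 0 \/ e x = 1.
Proof.
move=> [[[M e_norm] sharp_e] e_idem] x.
have sharp_sqr_e : sharp (fun y => e y ^+ 2) = e := e_idem.
have e_sqr_bounds y : 0 <= e y ^+ 2 <= M ^+ 2.
  by have := e_norm y; rewrite ler_norml sqr_ge0 => /andP[? ?]; nra.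
have e_bounds y : 0 <= e y <= M.
  have := e_norm y; rewrite ler_norml => /andP[_ ->]; rewrite andbT.
  by rewrite -sharp_sqr_e; case/andP: (sharp_bounds e_sqr_bounds y).
have e_sqr : e x = e x ^+ 2.
  by rewrite -{1}sharp_sqr_e (sharp_sqr e_bounds) sharp_e.
have : e x * (e x - 1) = 0 by rewrite mulrBr mulr1 -expr2 -e_sqr subrr.
by move/eqP; rewrite mulf_eq0 subr_eq0 => /orP[/eqP|/eqP]; [left|right].
Qed.

(* Conversely, every idempotent of N(X) is the characteristic function of a
   regular open set, namely of its level set 1. *)
Lemma idempotentN_chiE (e : X -> R) :
  idempotentN e -> exists U : set X, regular_open U /\ e = chi U.
Proof.
move=> e_idem; pose U := [set x | e x = 1].
have eU : e = chi U.
  apply: funext => x; case: (idempotentN_01 e_idem x) => ex; rewrite ex.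
    by rewrite chi_out // /U /= ex => /eqP; rewrite eq_sym oner_eq0.
  by rewrite chi_in.
exists U; split => //; apply: (@chi_inj R).
by rewrite -sharp_chi -eU; case: e_idem => -[_ ->].
Qed.

End Idempotents.

Section BooleanOperations.
Context {R : realType} {X : topologicalType}.
Implicit Types (U V : set X).

Lemma regular_open_open U : regular_open U -> open U.
Proof. by move=> ->; exact: open_interior. Qed.

Lemma regular_open_setI U V : regular_open U -> regular_open V ->
  interior (closure (U `&` V)) = U `&` V.
Proof.
move=> roU roV; apply/seteqP; split => [x clx|].
  by split; [rewrite roU | rewrite roV]; apply: interiorS clx; apply: closureS.
have oUV : open (U `&` V) by apply: openI; exact: regular_open_open.
by rewrite -(open_subsetE _ oUV); exact: subset_closure.
Qed.

Lemma oneN_chi : oneN = chi setT :> (X -> R).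
Proof.
rewrite /oneN (_ : (fun _ => 1) = chi setT); last by rewrite /chi indicT.
by rewrite sharp_chi closureT interiorT.
Qed.

Lemma zeroN_chi : zeroN = chi set0 :> (X -> R).
Proof.
rewrite /zeroN (_ : (fun _ => 0) = chi set0); last by rewrite /chi indic0.
by rewrite sharp_chi closure0 interior0.
Qed.

Lemma idem_meet_chi U V : regular_open U -> regular_open V ->
  idem_meet (chi U) (chi V) = chi (ro_meet U V) :> (X -> R).
Proof. by move=> roU roV; rewrite /idem_meet mulN_chi regular_open_setI. Qed.

(* chi_U + chi_V - chi_U chi_V normalizes to chi of int(cl(U \/ V)), because
   chi_U + chi_V = chi_(U \/ V) + chi_(U /\ V) is a nested step function. *)
Lemma idem_join_chi U V : regular_open U -> regular_open V ->
  idem_join (chi U) (chi V) = chi (ro_join U V) :> (X -> R).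
Proof.
move=> roU roV.
have addN_chi : addN (chi U) (chi V) =
    (fun x => chi (ro_join U V) x + chi (U `&` V) x) :> (X -> R).
  rewrite /addN chi_addE sharp_chi_add_nested; last by move=> x [Ux _]; left.
  by rewrite regular_open_setI.
rewrite /idem_join /subN addN_chi mulN_chi regular_open_setI //.
rewrite (_ : (fun x => _) = chi (ro_join U V)); last by apply: funext => x; rewrite addrK.
by rewrite sharp_chi /ro_join; congr chi; exact: interior_closure_idem.
Qed.

Lemma idem_compl_chi U : regular_open U ->
  idem_compl (chi U) = chi (ro_compl U) :> (X -> R).
Proof.
move=> roU; rewrite /idem_compl /subN oneN_chi.
rewrite (_ : (fun x => _) = chi (~` U)); last first.
  by rewrite -chi_setC; apply: funext => x; rewrite chi_in.
rewrite sharp_chi /ro_compl -(closure_id (~` U)).1 //.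
by apply: open_closedC; exact: regular_open_open.
Qed.

End BooleanOperations.

Theorem mainTheorem11 (R : realType) (X : topologicalType) :
  (forall e : X -> R,
      idempotentN e <-> exists U : set X, regular_open U /\ e = chi U) /\
  (forall U V : set X, regular_open U -> regular_open V ->
      chi U = chi V :> (X -> R) -> U = V) /\
  (forall U V : set X, regular_open U -> regular_open V ->
      chi (ro_meet U V) = idem_meet (chi U) (chi V) :> (X -> R) /\
      chi (ro_join U V) = idem_join (chi U) (chi V) :> (X -> R)) /\
  (forall U : set X, regular_open U ->
      chi (ro_compl U) = idem_compl (chi U) :> (X -> R)) /\
  chi set0 = (zeroN : X -> R) /\ chi setT = (oneN : X -> R).
Proof.
split.
  move=> e; split; first exact: idempotentN_chiE.
  by move=> [U [roU ->]]; exact: idempotentN_chi.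
split; first by move=> U V _ _; exact: chi_inj.
split; first by move=> U V roU roV; rewrite idem_meet_chi ?idem_join_chi.
split; first by move=> U roU; rewrite idem_compl_chi.
by rewrite zeroN_chi oneN_chi.
Qed.
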